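(* Let $\mathbb{A}$ be a 2-category, let $p_0:e\to b_0$ and $p_1:e\to b_1$ be 1-cells of $\mathbb{A}$, and suppose $\mathbb{A}$ has an opcomma object $(p_0\uparrow p_1,\delta^0,\delta^1,\alpha)$ of $p_1$ along $p_0$. For every 1-cell $h:p_0\uparrow p_1\to y$ of $\mathbb{A}$ the following statements are equivalent: (i) the pair $(h,\ \mathrm{id}_{h\delta^0})$ is a right Kan extension of $h\delta^0$ along $\delta^0$; (ii) the pair $(h\delta^1,\ \mathrm{id}_h\ast\alpha)$ is a right Kan extension of $h\delta^0p_1$ along $p_0$.
   Context: A 2-category is a $\mathbf{Cat}$-enriched category; in it, composition of 1-cells is written by juxtaposition, vertical composition of 2-cells by $\cdot$, horizontal composition by $\ast$, and $\mathrm{id}_f$ is the identity 2-cell on a 1-cell $f$. An opcomma object of $p_1$ along $p_0$ is an object $p_0\uparrow p_1$ with 1-cells $\delta^0:b_1\to p_0\uparrow p_1$, $\delta^1:b_0\to p_0\uparrow p_1$ and a 2-cell $\alpha:\delta^1p_0\Rightarrow\delta^0p_1$ such that, for every object $y$, the functor $h\mapsto(h\delta^0,h\delta^1,\mathrm{id}_h\ast\alpha)$, $\xi\mapsto(\xi\ast\mathrm{id}_{\delta^0},\xi\ast\mathrm{id}_{\delta^1})$ is an isomorphism from $\mathbb{A}(p_0\uparrow p_1,y)$ onto the category whose objects are triples $(h_0:b_1\to y,\ h_1:b_0\to y,\ \beta:h_1p_0\Rightarrow h_0p_1)$ and whose morphisms $(h_0,h_1,\beta)\to(h_0',h_1',\beta')$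 are pairs of 2-cells $\xi_0:h_0\Rightarrow h_0'$, $\xi_1:h_1\Rightarrow h_1'$ with $(\xi_0\ast\mathrm{id}_{p_1})\cdot\beta=\beta'\cdot(\xi_1\ast\mathrm{id}_{p_0})$. A right Kan extension of $f:z\to y$ along $g:z\to x$ is a pair $(r:x\to y,\ \gamma:rg\Rightarrow f)$ such that for every 1-cell $k:x\to y$ the assignment $\beta\mapsto\gamma\cdot(\beta\ast\mathrm{id}_g)$ is a bijection from 2-cells $k\Rightarrow r$ to 2-cells $kg\Rightarrow f$. *)

Unset Implicit Arguments.
Unset Strict Implicit.

Definition cast {H : Type} (C : H -> H -> Type) {f f' g g' : H}
  (ef : f = f') (eg : g = g') (t : C f g) : C f' g' :=
  match ef in _ = f1 return C f1 g' with
  | eq_refl => match eg in _ = g1 return C f g1 with eq_refl => t end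
  end.

(* Conventions: comp1 f g = "f g" (first g, then f);
   vcomp t s = "t . s" (first s, then t);  hcomp t s = "t * s". *)
Record TwoCat := {
  ob : Type;
  hom : ob -> ob -> Type;
  cell : forall a b, hom a b -> hom a b -> Type;
  id1 : forall a, hom a a;
  comp1 : forall a b c, hom b c -> hom a b -> hom a c;
  id2 : forall a b (f : hom a b), cell a b f f;
  vcomp : forall a b (f g h : hom a b), cell a b g h -> cell a b f g -> cell a b f h;
  hcomp : forall a b c (f f' : hom b c) (g g' : hom a b),
      cell b c f f' -> cell a b g g' -> cell a c (comp1 a b c f g) (comp1 a b c f' g');
  comp1_assoc : forall a b c d (f : hom c d) (g : hom b c) (h : hom a b),
      comp1 a b d (comp1 b c d f g) h = comp1 a c d f (comp1 a b c g h);
  comp1_id_l : forall a b (f : hom a b), comp1 a b b (id1 b) f = f;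
  comp1_id_r : forall a b (f : hom a b), comp1 a a b f (id1 a) = f;
  vcomp_assoc : forall a b (f g h k : hom a b) (t : cell a b h k) (s : cell a b g h)
      (r : cell a b f g),
      vcomp a b f h k t (vcomp a b f g h s r) = vcomp a b f g k (vcomp a b g h k t s) r;
  vcomp_id_l : forall a b (f g : hom a b) (t : cell a b f g),
      vcomp a b f g g (id2 a b g) t = t;
  vcomp_id_r : forall a b (f g : hom a b) (t : cell a b f g),
      vcomp a b f f g t (id2 a b f) = t;
  hcomp_id : forall a b c (f : hom b c) (g : hom a b),
      hcomp a b c f f g g (id2 b c f) (id2 a b g) = id2 a c (comp1 a b c f g);
  interchange : forall a b c (f f' f'' : hom b c) (g g' g'' : hom a b)
      (t' : cell b c f' f'') (t : cell b c f f') (s' : cell a b g' g'')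
      (s : cell a b g g'),
      hcomp a b c f f'' g g'' (vcomp b c f f' f'' t' t) (vcomp a b g g' g'' s' s)
      = vcomp a c _ _ _ (hcomp a b c f' f'' g' g'' t' s') (hcomp a b c f f' g g' t s);
  hcomp_assoc : forall a b c d (f f' : hom c d) (g g' : hom b c) (h h' : hom a b)
      (t : cell c d f f') (s : cell b c g g') (r : cell a b h h'),
      hcomp a b d _ _ _ _ (hcomp b c d _ _ _ _ t s) r =
      cast (cell a d) (eq_sym (comp1_assoc a b c d f g h))
           (eq_sym (comp1_assoc a b c d f' g' h'))
           (hcomp a c d _ _ _ _ t (hcomp a b c _ _ _ _ s r));
  hcomp_id_l : forall a b (f f' : hom a b) (t : cell a b f f'),
      hcomp a b b _ _ _ _ (id2 b b (id1 b)) t =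
      cast (cell a b) (eq_sym (comp1_id_l a b f)) (eq_sym (comp1_id_l a b f')) t;
  hcomp_id_r : forall a b (f f' : hom a b) (t : cell a b f f'),
      hcomp a a b _ _ _ _ t (id2 a a (id1 a)) =
      cast (cell a b) (eq_sym (comp1_id_r a b f)) (eq_sym (comp1_id_r a b f')) t
}.

Set Implicit Arguments.
Arguments hom {_} _ _.
Arguments id1 {_} a.
Arguments cell {_ a b} _ _.
Arguments comp1 {_ a b c} _ _.
Arguments id2 {_ a b} f.
Arguments vcomp {_ a b f g h} _ _.
Arguments hcomp {_ a b c f f' g g'} _ _.
Arguments comp1_assoc {_ a b c d} f g h.

(* Objects of the category of "opcomma cones" with vertex y:
   triples (h0 : b1 -> y, h1 : b0 -> y, beta : h1 p0 => h0 p1). *)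
Record octriple (A : TwoCat) (e b0 b1 y : ob A) (p0 : hom e b0) (p1 : hom e b1) :=
  Octriple {
    oc0 : hom b1 y;
    oc1 : hom b0 y;
    ocb : cell (comp1 oc1 p0) (comp1 oc0 p1) }.

(* The 2-cell  id_h * alpha : (h d1) p0 => (h d0) p1  (strict associativity
   used to identify h (d1 p0) with (h d1) p0). *)
Definition whisk (A : TwoCat) (e b0 b1 c y : ob A) (p0 : hom e b0) (p1 : hom e b1)
  (d0 : hom b1 c) (d1 : hom b0 c) (alpha : cell (comp1 d1 p0) (comp1 d0 p1))
  (h : hom c y) : cell (comp1 (comp1 h d1) p0) (comp1 (comp1 h d0) p1) :=
  cast (@cell A e y) (eq_sym (comp1_assoc h d1 p0)) (eq_sym (comp1_assoc h d0 p1))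
       (hcomp (id2 h) alpha).

(* (c, d0, d1, alpha) is an opcomma object of p1 along p0: for every y the
   functor h |-> (h d0, h d1, id_h * alpha), xi |-> (xi * id_d0, xi * id_d1)
   is an isomorphism of categories, i.e. bijective on objects and bijective on
   each hom-set. *)
Definition is_opcomma (A : TwoCat) (e b0 b1 c : ob A) (p0 : hom e b0) (p1 : hom e b1)
  (d0 : hom b1 c) (d1 : hom b0 c) (alpha : cell (comp1 d1 p0) (comp1 d0 p1)) : Prop :=
  forall y : ob A,
    (forall t : octriple y p0 p1,
        exists! h : hom c y,
          @Octriple A e b0 b1 y p0 p1 (comp1 h d0) (comp1 h d1) (whisk alpha h) = t)
    /\
    (forall (h h' : hom c y)
            (xi0 : cell (comp1 h d0) (comp1 h' d0))
            (xi1 : cell (comp1 h d1) (comp1 h' d1)),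
        vcomp (hcomp xi0 (id2 p1)) (whisk alpha h)
          = vcomp (whisk alpha h') (hcomp xi1 (id2 p0)) ->
        exists! xi : cell h h',
          hcomp xi (id2 d0) = xi0 /\ hcomp xi (id2 d1) = xi1).

Definition is_ran (A : TwoCat) (z x y : ob A) (f : hom z y) (g : hom z x)
  (r : hom x y) (gamma : cell (comp1 r g) f) : Prop :=
  forall k : hom x y,
    forall delta : cell (comp1 k g) f,
      exists! beta : cell k r, vcomp gamma (hcomp beta (id2 g)) = delta.
Arguments is_ran {A z x y} f g r gamma.


(* By the one-dimensional part of the opcomma property, a pair
   (k : b0 -> y, delta : k p0 => h d0 p1) is (k' d1, id_k' * alpha) for some
   k' : c -> y with k' d0 = h d0.  By the two-dimensional part, a 2-cell
   k' => h is a pair of 2-cells k' d0 => h d0, k' d1 => h d1 compatible with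
   alpha; when the first one is the identity, compatibility says exactly that
   the second factors delta through id_h * alpha.  So the factorisations
   demanded by (ii) are the restrictions along d1 of the 2-cells k' => h
   restricting to the identity along d0, which (i) provides uniquely.
   Conversely, (ii) applied to (k d1, (delta * p1) . (id_k * alpha)) supplies
   the second component of the 2-cell k => h demanded by (i). *)

Section TwoCells.
Context {A : TwoCat}.

Definition eq_cell {a b : ob A} {f g : hom a b} (ef : f = g) : cell f g :=
  cast (@cell A a b) eq_refl ef (id2 f).

Lemma vcomp_hcomp_eq_cell (a b c : ob A) (f f' : hom b c) (p : hom a b)
  (g : hom a c) (ef : f = f') (s : cell g (comp1 f p)) :
  vcomp (hcomp (eq_cell ef) (id2 p)) s
  = cast (@cell A a c) eq_refl (f_equal (fun x => comp1 x p) ef) s.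
Proof. destruct ef; simpl; rewrite hcomp_id; apply vcomp_id_l. Qed.

Lemma vcomp_cast (a b : ob A) (f f' g g' h h' : hom a b)
  (ef : f = f') (eg : g = g') (eh : h = h') (t : cell g h) (s : cell f g) :
  vcomp (cast (@cell A a b) eg eh t) (cast (@cell A a b) ef eg s)
  = cast (@cell A a b) ef eh (vcomp t s).
Proof. destruct ef, eg, eh; reflexivity. Qed.

Lemma is_ran_id_iff {z x y : ob A} {g : hom z x} {h : hom x y} :
  is_ran (comp1 h g) g h (id2 (comp1 h g))
  <-> forall (k : hom x y) (delta : cell (comp1 k g) (comp1 h g)),
        exists! xi : cell k h, hcomp xi (id2 g) = delta.
Proof.
  unfold is_ran; split; intros Hran k delta;
    destruct (Hran k delta) as [xi [Hxi Uxi]]; exists xi.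
  - split; [now rewrite vcomp_id_l in Hxi |].
    intros xi' Hxi'; apply Uxi; now rewrite vcomp_id_l.
  - split; [now rewrite vcomp_id_l |].
    intros xi' Hxi'; apply Uxi; now rewrite vcomp_id_l in Hxi'.
Qed.

Lemma whisk_natural (e b0 b1 c y : ob A) (p0 : hom e b0) (p1 : hom e b1)
  (d0 : hom b1 c) (d1 : hom b0 c) (alpha : cell (comp1 d1 p0) (comp1 d0 p1))
  (k h : hom c y) (xi : cell k h) :
  vcomp (hcomp (hcomp xi (id2 d0)) (id2 p1)) (whisk alpha k)
  = vcomp (whisk alpha h) (hcomp (hcomp xi (id2 d1)) (id2 p0)).
Proof.
  unfold whisk; rewrite !hcomp_assoc, !hcomp_id, !vcomp_cast.
  now rewrite <- !interchange, !vcomp_id_l, !vcomp_id_r.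
Qed.

Lemma Octriple_inj {e b0 b1 y : ob A} {p0 : hom e b0} {p1 : hom e b1}
  {t t' : octriple y p0 p1} :
  t = t' ->
  exists (e0 : oc0 t = oc0 t') (e1 : oc1 t = oc1 t'),
    cast (@cell A e y) (f_equal (fun x => comp1 x p0) e1)
         (f_equal (fun x => comp1 x p1) e0) (ocb t) = ocb t'.
Proof. intros <-; now exists eq_refl, eq_refl. Qed.

End TwoCells.

Section OpcommaKan.
Context {A : TwoCat} {e b0 b1 c y : ob A} {p0 : hom e b0} {p1 : hom e b1}
  {d0 : hom b1 c} {d1 : hom b0 c} {alpha : cell (comp1 d1 p0) (comp1 d0 p1)}.
Hypothesis Hop : is_opcomma alpha.
Variable h : hom c y.

Lemma ran_whisk_of_ran_along_d0 :
  is_ran (comp1 h d0) d0 h (id2 (comp1 h d0)) ->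
  is_ran (comp1 (comp1 h d0) p1) p0 (comp1 h d1) (whisk alpha h).
Proof.
  intros Hran k delta.
  destruct (Hop y) as [Hob Hmor].
  destruct (Hob (@Octriple A e b0 b1 y p0 p1 (comp1 h d0) k delta))
    as [k' [Hk' _]].
  destruct (Octriple_inj Hk') as [e0 [e1 Edelta]]; simpl in *.
  subst k delta.
  destruct (proj1 is_ran_id_iff Hran k' (eq_cell e0)) as [xi [Hxi Uxi]].
  exists (hcomp xi (id2 d1)); split.
  - rewrite <- whisk_natural, Hxi; apply vcomp_hcomp_eq_cell.
  - intros beta Hbeta.
    destruct (Hmor k' h (eq_cell e0) beta) as [xi' [[Hxi'0 Hxi'1] _]].
    { rewrite Hbeta; apply vcomp_hcomp_eq_cell. }
    now rewrite <- Hxi'1, (Uxi xi' Hxi'0).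
Qed.

Lemma ran_along_d0_of_ran_whisk :
  is_ran (comp1 (comp1 h d0) p1) p0 (comp1 h d1) (whisk alpha h) ->
  is_ran (comp1 h d0) d0 h (id2 (comp1 h d0)).
Proof.
  intros Hran; apply is_ran_id_iff; intros k delta.
  destruct (Hop y) as [_ Hmor].
  destruct (Hran (comp1 k d1) (vcomp (hcomp delta (id2 p1)) (whisk alpha k)))
    as [beta [Hbeta Ubeta]].
  destruct (Hmor k h delta beta) as [xi [[Hxi0 _] Uxi]].
  { now rewrite Hbeta. }
  exists xi; split; [exact Hxi0 |].
  intros xi' Hxi'; apply Uxi; split; [exact Hxi' |].
  symmetry; apply Ubeta; now rewrite <- whisk_natural, Hxi'.
Qed.

End OpcommaKan.

Theorem lemma3p5 (A : TwoCat) (e b0 b1 c y : ob A)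
  (p0 : hom e b0) (p1 : hom e b1)
  (d0 : hom b1 c) (d1 : hom b0 c) (alpha : cell (comp1 d1 p0) (comp1 d0 p1))
  (Hop : is_opcomma alpha)
  (h : hom c y) :
  is_ran (comp1 h d0) d0 h (id2 (comp1 h d0))
  <-> is_ran (comp1 (comp1 h d0) p1) p0 (comp1 h d1) (whisk alpha h).
Proof.
  split.
  - exact (ran_whisk_of_ran_along_d0 Hop h).
  - exact (ran_along_d0_of_ran_whisk Hop h).
Qed.
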